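(* Every $T_1$-space with a regular base at non-isolated points has a point-countable base.
   Context: $I(X)$ is the set of isolated points. A base $\mathcal{B}$ is regular at $x$ if for every neighborhood $U$ of $x$ there is an open $V$ with $x\in V\subset U$ such that $\{B\in\mathcal{B}: B\cap V\neq\emptyset,\ B\not\subset U\}$ is finite; a regular base at non-isolated points is regular at every $x\in X\setminus I(X)$. A base is point-countable if each point lies in at most countably many of its members. *)

From Stdlib Require Import List.

Set Implicit Arguments.

Definition is_topology (X : Type) (open : (X -> Prop) -> Prop) : Prop :=
  open (fun _ => True) /\
  (forall U V, open U -> open V -> open (fun x => U x /\ V x)) /\
  (forall F : (X -> Prop) -> Prop, (forall U, F U -> open U) ->
     open (fun x => exists U, F U /\ U x)).

Definition subset (X : Type) (A B : X -> Prop) : Prop := forall x, A x -> B x.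

Definition is_base (X : Type) (open : (X -> Prop) -> Prop)
    (B : (X -> Prop) -> Prop) : Prop :=
  (forall b, B b -> open b) /\
  (forall U x, open U -> U x -> exists b, B b /\ b x /\ subset b U).

Definition T1 (X : Type) (open : (X -> Prop) -> Prop) : Prop :=
  forall x y : X, x <> y -> exists U, open U /\ U x /\ ~ U y.

Definition isolated (X : Type) (open : (X -> Prop) -> Prop) (x : X) : Prop :=
  open (fun y => y = x).

Definition nbhd (X : Type) (open : (X -> Prop) -> Prop) (x : X) (N : X -> Prop) : Prop :=
  exists U, open U /\ U x /\ subset U N.

Definition finite_family (X : Type) (F : (X -> Prop) -> Prop) : Prop :=
  exists l : list (X -> Prop), forall b, F b -> In b l.

Definition countable_family (X : Type) (F : (X -> Prop) -> Prop) : Prop :=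
  exists f : (X -> Prop) -> nat, forall b1 b2, F b1 -> F b2 -> f b1 = f b2 -> b1 = b2.

Definition regular_at (X : Type) (open : (X -> Prop) -> Prop)
    (B : (X -> Prop) -> Prop) (x : X) : Prop :=
  forall U, nbhd open x U ->
    exists V, open V /\ V x /\ subset V U /\
      finite_family (fun b => B b /\ (exists y, b y /\ V y) /\ ~ subset b U).

Definition regular_base_at_nonisolated (X : Type) (open : (X -> Prop) -> Prop)
    (B : (X -> Prop) -> Prop) : Prop :=
  is_base open B /\ forall x, ~ isolated open x -> regular_at open B x.

Definition point_countable (X : Type) (B : (X -> Prop) -> Prop) : Prop :=
  forall x : X, countable_family (fun b => B b /\ b x).

(* Let B be a base regular at non-isolated points.  For a in B call an open
   set V "tame for a" if V is contained in a and meets only finitely many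
   members of B not contained in a; the "core" of a is the union of its tame
   sets.  Regularity says precisely that every non-isolated point of a lies in
   the core of a, so the cores together with the singletons of isolated points
   form a base.  If p lies in the core of a, a tame set V with p in V witnesses
   that only finitely many members of B containing p fail to lie in a.  Hence
   the family of those a in B whose core contains p is a family in which every
   member contains all but finitely many others, and a rank argument (the
   least size of the finite exceptional set strictly decreases along proper
   inclusions, so each rank level is finite) shows that such a family is
   countable. *)
From Stdlib Require Import List Cantor Wf_nat Lia.
From Stdlib Require Import Classical ClassicalEpsilon FunctionalExtensionality PropExtensionality.

Section Countability.
Variable X : Type.

Lemma set_ext (a c : X -> Prop) : subset a c -> subset c a -> a = c.
Proof.
  intros Hac Hca. apply functional_extensionality; intro x.
  apply propositional_extensionality; split; auto.
Qed.

(* A family mapped to nat with finite fibers is countable: encode a member by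
   its value together with its position in a list enumerating its fiber. *)
Lemma countable_of_finite_fibers (F : (X -> Prop) -> Prop) (r : (X -> Prop) -> nat) :
  (forall n, finite_family (fun a => F a /\ r a = n)) -> countable_family F.
Proof.
  intros Hfin. destruct (choice _ Hfin) as [Ls HLs].
  assert (Hpos : forall b, exists k, F b -> nth k (Ls (r b)) (fun _ => False) = b).
  { intros b. destruct (classic (F b)) as [Fb|Fb]; [|exists 0; tauto].
    destruct (In_nth (Ls (r b)) b (fun _ => False)) as [k [_ Hk]];
      [apply HLs; auto|].
    exists k; auto. }
  destruct (choice _ Hpos) as [pos Hnth].
  exists (fun b => Cantor.to_nat (r b, pos b)).
  intros b1 b2 F1 F2 Hcode.
  apply (f_equal Cantor.of_nat) in Hcode. rewrite !cancel_of_to in Hcode.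
  injection Hcode as Hr Hk.
  rewrite <- (Hnth b1 F1), <- (Hnth b2 F2), Hr, Hk. reflexivity.
Qed.

Lemma countable_image (F G : (X -> Prop) -> Prop) (h : (X -> Prop) -> X -> Prop) :
  countable_family F -> (forall W, G W -> exists a, F a /\ W = h a) ->
  countable_family G.
Proof.
  intros [f Hf] HG.
  assert (Hpre : forall W, exists a, G W -> F a /\ W = h a).
  { intros W. destruct (classic (G W)) as [GW|GW].
    - destruct (HG W GW) as [a Ha]. exists a; auto.
    - exists (fun _ => False); tauto. }
  destruct (choice _ Hpre) as [g Hg].
  exists (fun W => f (g W)).
  intros W1 W2 G1 G2 E.
  destruct (Hg W1 G1) as [F1 ->]. destruct (Hg W2 G2) as [F2 ->].
  rewrite (Hf _ _ F1 F2 E). reflexivity.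
Qed.

Lemma countable_add_one (F G : (X -> Prop) -> Prop) (w0 : X -> Prop) :
  countable_family F -> (forall W, G W -> W = w0 \/ F W) -> countable_family G.
Proof.
  intros [f Hf] HG.
  exists (fun W => if excluded_middle_informative (W = w0) then 0 else S (f W)).
  intros W1 W2 G1 G2.
  destruct (excluded_middle_informative (W1 = w0)) as [e1|e1];
    destruct (excluded_middle_informative (W2 = w0)) as [e2|e2];
    try congruence.
  intros E. injection E as E.
  destruct (HG W1 G1) as [?|F1]; [congruence|].
  destruct (HG W2 G2) as [?|F2]; [congruence|]. auto.
Qed.

Section Rank.
Variable F : (X -> Prop) -> Prop.

Definition not_below (a : X -> Prop) : (X -> Prop) -> Prop :=
  fun c => F c /\ ~ subset c a.

Definition cover_size (a : X -> Prop) (n : nat) : Prop :=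
  exists L, length L <= n /\ forall c, not_below a c -> In c L.

Definition is_rank (a : X -> Prop) (n : nat) : Prop :=
  cover_size a n /\ forall m, cover_size a m -> n <= m.

Lemma rank_exists (a : X -> Prop) :
  finite_family (not_below a) -> exists n, is_rank a n.
Proof.
  intros [L HL].
  destruct (dec_inh_nat_subset_has_unique_least_element (cover_size a))
    as [n [[Hn Hleast] _]].
  - intros n. apply classic.
  - exists (length L). exists L. auto.
  - exists n. split; auto.
Qed.

(* The rank drops strictly along proper inclusions: a list witnessing the rank
   of c contains a, and deleting a leaves a list covering what is not below a. *)
Lemma rank_strict (a c : X -> Prop) (n m : nat) :
  F a -> subset c a -> c <> a -> is_rank a n -> is_rank c m -> n < m.
Proof.
  intros Fa Hca Hne [_ Hmin_a] [[L [HLm HLc]] _].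
  set (eq_dec := fun x y : X -> Prop => excluded_middle_informative (x = y)).
  assert (Ha_in : In a L).
  { apply HLc. split; auto. intro Hac. apply Hne, set_ext; auto. }
  assert (Hcover : cover_size a (length (remove eq_dec a L))).
  { exists (remove eq_dec a L). split; auto.
    intros d [Fd Hda]. apply in_in_remove.
    - intros ->. apply Hda. intros x hx; auto.
    - apply HLc. split; auto. intro Hdc. apply Hda. intros x hx; auto. }
  pose proof (Hmin_a _ Hcover). pose proof (remove_length_lt eq_dec L a Ha_in). lia.
Qed.

(* Each rank level is finite: besides one member a0, it lies among the members
   not below a0, since a member below a0 would have strictly larger rank. *)
Lemma rank_level_finite (r : (X -> Prop) -> nat) (n : nat) :
  (forall a, F a -> is_rank a (r a)) -> finite_family (fun a => F a /\ r a = n).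
Proof.
  intros Hr.
  destruct (classic (exists a0, F a0 /\ r a0 = n)) as [[a0 [Fa0 Ha0]]|Hempty].
  - destruct (Hr a0 Fa0) as [[L [_ HL]] _].
    exists (a0 :: L). intros c [Fc Hc].
    destruct (classic (c = a0)) as [->|Hne]; [left; auto|right].
    apply HL. split; auto. intro Hca.
    pose proof (rank_strict a0 c (r a0) (r c) Fa0 Hca Hne (Hr a0 Fa0) (Hr c Fc)). lia.
  - exists nil. intros c Hc. exfalso. eauto.
Qed.

Theorem countable_of_cofinitely_below :
  (forall a, F a -> finite_family (not_below a)) -> countable_family F.
Proof.
  intros Hfin.
  assert (Hr : forall a, exists n, F a -> is_rank a n).
  { intros a. destruct (classic (F a)) as [Fa|Fa]; [|exists 0; tauto].
    destruct (rank_exists a (Hfin a Fa)) as [n Hn]. exists n; auto. }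
  destruct (choice _ Hr) as [r Hrank].
  apply (countable_of_finite_fibers F r). intros n.
  apply rank_level_finite. exact Hrank.
Qed.
End Rank.
End Countability.

Section Refinement.
Variables (X : Type) (open : (X -> Prop) -> Prop) (B : (X -> Prop) -> Prop).
Hypothesis open_union : forall Fam : (X -> Prop) -> Prop,
  (forall U, Fam U -> open U) -> open (fun x => exists U, Fam U /\ U x).

Definition tame (a V : X -> Prop) : Prop :=
  open V /\ subset V a /\
  finite_family (fun b => B b /\ (exists y, b y /\ V y) /\ ~ subset b a).

Definition core (a : X -> Prop) : X -> Prop :=
  fun x => exists V, tame a V /\ V x.

Lemma core_open (a : X -> Prop) : open (core a).
Proof. apply open_union. intros V [HV _]. exact HV. Qed.

Lemma core_subset (a : X -> Prop) : subset (core a) a.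
Proof. intros x [V [[_ [HVa _]] Vx]]. auto. Qed.

Lemma core_contains_regular_point (x : X) (a : X -> Prop) :
  regular_at open B x -> open a -> a x -> core a x.
Proof.
  intros Hreg Ha ax.
  destruct (Hreg a) as [V [HV [Vx [HVa Hfin]]]].
  { exists a. repeat split; auto. intros y hy; auto. }
  exists V. repeat split; auto.
Qed.

Definition refined_base (W : X -> Prop) : Prop :=
  (exists z, isolated open z /\ W = (fun y => y = z)) \/
  (exists a, B a /\ W = core a).

Lemma refined_base_is_base :
  regular_base_at_nonisolated open B -> is_base open refined_base.
Proof.
  intros [[HBopen HBbase] Hreg]. split.
  - intros W [[z [Hz ->]]|[a [_ ->]]]; [exact Hz|apply core_open].
  - intros U x HU Ux.
    destruct (classic (isolated open x)) as [Hiso|Hniso].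
    + exists (fun y => y = x). repeat split; [left; eauto|intros y ->; auto].
    + destruct (HBbase U x HU Ux) as [a [Ba [ax HaU]]].
      exists (core a). repeat split; [right; eauto| |].
      * exact (core_contains_regular_point x a (Hreg x Hniso) (HBopen a Ba) ax).
      * intros y hy. apply HaU, core_subset, hy.
Qed.

(* The members of B whose core contains p form a countable family: a tame set
   for a containing p shows that only finitely many of them are not below a. *)
Lemma cores_through_point_countable (p : X) :
  countable_family (fun a => B a /\ core a p).
Proof.
  apply countable_of_cofinitely_below.
  intros a [_ [V [[_ [_ [L HL]]] Vp]]].
  exists L. intros c [[Bc cp] Hca]. apply HL. repeat split; auto.
  exists p. split; auto. apply core_subset, cp.
Qed.

Lemma refined_base_point_countable : point_countable refined_base.
Proof.
  intros p.
  apply (@countable_add_one X (fun W => exists a, (B a /\ core a p) /\ W = core a)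
                           _ (fun y => y = p)).
  - apply (@countable_image X (fun a => B a /\ core a p) _ core); auto.
    apply cores_through_point_countable.
  - intros W [[[z [_ ->]]|[a [Ba ->]]] Wp].
    + left. subst. reflexivity.
    + right. exists a. auto.
Qed.
End Refinement.

Theorem mainTheorem17 (X : Type) (open : (X -> Prop) -> Prop) :
  is_topology open -> T1 open ->
  (exists B, regular_base_at_nonisolated open B) ->
  exists B, is_base open B /\ point_countable B.
Proof.
  intros [_ [_ Hunion]] _ [B HB].
  exists (refined_base X open B). split.
  - exact (refined_base_is_base X open B Hunion HB).
  - apply refined_base_point_countable.
Qed.
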